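(* Let $(A,\triangleright_A,\triangleleft_A)$ be a pre-Leibniz algebra with sub-adjacent Leibniz algebra $(A,\bullet_A)$, $x\bullet_A y=x\triangleright_A y+x\triangleleft_A y$. Define multiplications on $A\oplus A^*$ by $$(x+a^* )\bullet_1(y+b^* )=x\bullet_A y+\mathcal L^*_{\triangleright_A}(x)b^*-(\mathcal L^*_{\triangleright_A}+\mathcal R^*_{\triangleleft_A})(y)a^*,$$ $$(x+a^* )\bullet_2(y+b^* )=x\bullet_A y+\mathcal L^*_{\bullet_A}(x)b^*-(\mathcal L^*_{\bullet_A}+\mathcal R^*_{\bullet_A})(y)a^*,$$ for $x,y\in A$, $a^*,b^*\in A^*$. Let $x\vdash_A y=x\triangleright_A y$ and $x\dashv_A y=-y\triangleleft_A x$. Then $(A\oplus A^*,\bullet_1,\bullet_2)$ is a compatible Leibniz algebra if and only if $(A,\vdash_A,\dashv_A)$ is a Novikov dialgebra.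
   Context: All vector spaces are finite-dimensional over a field $\mathbb K$ of characteristic zero. For a multiplication $\ast$, $\mathcal L_\ast(x)y=x\ast y$, $\mathcal R_\ast(x)y=y\ast x$; for $f:A\to\mathrm{End}(V)$, $f^*:A\to\mathrm{End}(V^* )$ is $\langle f^*(x)u^*,v\rangle=-\langle u^*,f(x)v\rangle$. A pre-Leibniz algebra is a vector space $A$ with multiplications $\triangleright_A,\triangleleft_A$ such that for all $x,y,z$: $x\triangleright_A(y\triangleright_A z)=(x\triangleright_A y)\triangleright_A z+(x\triangleleft_A y)\triangleright_A z+y\triangleright_A(x\triangleright_A z)$; $x\triangleleft_A(y\triangleright_A z)=y\triangleright_A(x\triangleleft_A z)-(y\triangleright_A x)\triangleleft_A z-x\triangleleft_A(y\triangleleft_A z)$; $(x\triangleright_A y)\triangleleft_A z=-(y\triangleleft_A x)\triangleleft_A z$. Then $(A,\bullet_A)$ is a Leibniz algebra. A Leibniz algebra is a vector space with multiplication $\circ$ satisfying $x\circ(y\circ z)=(x\circ y)\circ z+y\circ(x\circ z)$. A compatible Leibniz algebra is $(B,\circ_1,\circ_2)$ with both $(B,\circ_i)$ Leibniz algebras and, for all $x,y,z$: $x\circ_2(y\circ_1 z)+x\circ_1(y\circ_2 z)-(x\circ_1 y)\circ_2 z-(x\circ_2 y)\circ_1 z-y\circ_2(x\circ_1 z)-y\circ_1(x\circ_2 z)=0$. A Novikov dialgebra is $(A,\vdash_A,\dashv_A)$ satisfying for all $x,y,z$: (ND1) $x\vdash_A(y\vdash_A z)=(x\vdash_A y)\vdash_A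 z-(y\dashv_A x)\vdash_A z+y\vdash_A(x\vdash_A z)$; (ND2) $(y\vdash_A z)\dashv_A x=y\vdash_A(z\dashv_A x)-z\dashv_A(y\vdash_A x)+(z\dashv_A y)\dashv_A x$; (ND3) $z\dashv_A(x\vdash_A y)=z\dashv_A(x\dashv_A y)$; (ND4) $(z\dashv_A y)\dashv_A x=(z\dashv_A x)\dashv_A y$; (ND5) $(y\dashv_A x)\vdash_A z=(y\vdash_A z)\dashv_A x=(y\vdash_A x)\vdash_A z$. *)

From HB Require Import structures.
From mathcomp Require Import all_boot all_order all_algebra.
Set Implicit Arguments. Unset Strict Implicit. Unset Printing Implicit Defensive.
Import GRing.Theory.
Local Open Scope ring_scope.

Definition bilinear_mul (K : fieldType) (A : lmodType K) (m : A -> A -> A) : Prop :=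
  (forall x, linear (m x)) /\ (forall y, linear (fun x => m x y)).

Definition leibniz (V : zmodType) (m : V -> V -> V) : Prop :=
  forall x y z, m x (m y z) = m (m x y) z + m y (m x z).

Definition compatible_leibniz (V : zmodType) (m1 m2 : V -> V -> V) : Prop :=
  [/\ leibniz m1, leibniz m2 &
   forall x y z,
     m2 x (m1 y z) + m1 x (m2 y z) - m2 (m1 x y) z - m1 (m2 x y) z
       - m2 y (m1 x z) - m1 y (m2 x z) = 0].

Definition pre_leibniz (A : zmodType) (l r : A -> A -> A) : Prop :=
  [/\ forall x y z, l x (l y z) = l (l x y) z + l (r x y) z + l y (l x z),
      forall x y z, r x (l y z) = l y (r x z) - r (l y x) z - r x (r y z) &
      forall x y z, r (l x y) z = - r (r y x) z].

Definition subadj (A : zmodType) (l r : A -> A -> A) : A -> A -> A :=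
  fun x y => l x y + r x y.

Definition novikov_dialgebra (A : zmodType) (ld rd : A -> A -> A) : Prop :=
  [/\ forall x y z, ld x (ld y z) = ld (ld x y) z - ld (rd y x) z + ld y (ld x z),
      forall x y z, rd (ld y z) x = ld y (rd z x) - rd z (ld y x) + rd (rd z y) x,
      forall x y z, rd z (ld x y) = rd z (rd x y),
      forall x y z, rd (rd z y) x = rd (rd z x) y &
      forall x y z, ld (rd y x) z = rd (ld y z) x /\ rd (ld y z) x = ld (ld y x) z].

Definition dual (K : fieldType) (A : vectType K) := 'Hom(A, K^o).

Definition dual_rep (K : fieldType) (A : vectType K) (f : A -> A -> A)
  (x : A) (u : dual A) : dual A := linfun (fun v : A => - u (f x v)).

Definition Lmul (A : Type) (m : A -> A -> A) : A -> A -> A := m.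
Definition Rmul (A : Type) (m : A -> A -> A) : A -> A -> A := fun x y => m y x.

Definition dsum_mul (K : fieldType) (A : vectType K) (mA ml mr : A -> A -> A)
  (p q : A * dual A) : A * dual A :=
  (mA p.1 q.1,
   dual_rep (Lmul ml) p.1 q.2
     - (dual_rep (Lmul ml) q.1 p.2 + dual_rep (Rmul mr) q.1 p.2)).

(* Write J(m, n)(x, y, z) = m x (n y z) - m (n x y) z - n y (m x z); the Leibniz and
   compatibility identities read J(m, m) = 0 and J(m2, m1) + J(m1, m2) = 0.  On A (+) A^*,
   for multiplications of the shape of bullet_1 and bullet_2, the A-component of J is J
   computed in A, and the A^*-component evaluated at v is a(c1) + b(c2) + c(c3) for three
   trilinear expressions c1, c2, c3 on A; since functionals separate vectors, J vanishes iff
   these do.  The pre-Leibniz identities make bullet_A Leibniz and then both bullet_1 and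
   bullet_2 Leibniz, so only compatibility is at stake.  Modulo the pre-Leibniz identities,
   its three coefficients are triangular combinations of the defects of (ND4) and of the two
   halves of (ND5), while (ND1)-(ND3) are the pre-Leibniz identities themselves. *)

From HB Require Import structures.
From mathcomp Require Import all_boot all_order all_algebra.
From mathcomp Require Import ring.
Import GRing.Theory.
Local Open Scope ring_scope.
Set Implicit Arguments. Unset Strict Implicit.

Section DualPairing.
Variables (K : fieldType) (A : vectType K).

Lemma eq0_by_dual (w : A) : (forall u : dual A, u w = 0) -> w = 0.
Proof.
move=> uw0; rewrite (coord_vbasis (memvf w)); apply: big1 => i _.
have := uw0 (linfun (coord (vbasis fullv) i : A -> K^o)); rewrite lfunE /= => ->.
by rewrite scale0r.
Qed.

Lemma eq_by_dual (w1 w2 : A) : (forall u : dual A, u w1 = u w2) -> w1 = w2.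
Proof.
by move=> uw12; apply/subr0_eq/eq0_by_dual => u; rewrite raddfB /= uw12 subrr.
Qed.

(* Specialized copies of raddfD and raddfN: rewriting with the generic lemmas diverges in
   the goals below, where every additive head is a candidate. *)
Lemma dualD (u : dual A) (w1 w2 : A) : u (w1 + w2) = u w1 + u w2.
Proof. exact: raddfD. Qed.

Lemma dualN (u : dual A) (w : A) : u (- w) = - u w.
Proof. exact: raddfN. Qed.

Lemma linfun_linearE (f : A -> K^o) : linear f -> linfun f =1 f.
Proof.
by move=> fL; exact: (lfunE (HB.pack f (GRing.isLinear.Build K A K^o *:%R f fL))).
Qed.

Lemma dual_repE (f : A -> A -> A) x u v :
  linear (f x) -> dual_rep f x u v = - u (f x v).
Proof.
move=> fxL; rewrite /dual_rep linfun_linearE // => k w1 w2.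
by rewrite fxL raddfD /= linearZZ opprD scalerN.
Qed.

End DualPairing.

Section BilinearMul.
Variables (K : fieldType) (A : vectType K) (m : A -> A -> A) (bm : bilinear_mul m).

Let mulr_linear y : {linear A -> A} :=
  HB.pack (fun x => m x y) (GRing.isLinear.Build K A A *:%R _ (bm.2 y)).
Let mull_linear x : {linear A -> A} :=
  HB.pack (m x) (GRing.isLinear.Build K A A *:%R _ (bm.1 x)).

Lemma bimulDl x y z : m (x + y) z = m x z + m y z.
Proof. exact: (raddfD (mulr_linear z)). Qed.
Lemma bimulDr x y z : m x (y + z) = m x y + m x z.
Proof. exact: (raddfD (mull_linear x)). Qed.
Lemma bimulNl x y : m (- x) y = - m x y.
Proof. exact: (raddfN (mulr_linear y)). Qed.
Lemma bimulNr x y : m x (- y) = - m x y.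
Proof. exact: (raddfN (mull_linear x)). Qed.

Lemma dual_rep_LmulE x u v : dual_rep (Lmul m) x u v = - u (m x v).
Proof. exact/dual_repE/bm.1. Qed.
Lemma dual_rep_RmulE x u v : dual_rep (Rmul m) x u v = - u (m v x).
Proof. exact/dual_repE/bm.2. Qed.

End BilinearMul.

Lemma subadj_bilinear (K : fieldType) (A : vectType K) (l r : A -> A -> A) :
  bilinear_mul l -> bilinear_mul r -> bilinear_mul (subadj l r).
Proof.
move=> [bl1 bl2] [br1 br2]; split=> [x|y] k w1 w2 /=; rewrite /subadj.
  by rewrite bl1 br1 scalerDr !addrA (addrAC _ (l x w2)).
by rewrite bl2 br2 scalerDr !addrA (addrAC _ (l w2 y)).
Qed.

Definition leibniz_defect (V : zmodType) (m n : V -> V -> V) (x y z : V) : V :=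
  m x (n y z) - m (n x y) z - n y (m x z).

Lemma leibniz_defectP (V : zmodType) (m : V -> V -> V) :
  leibniz m <-> forall x y z, leibniz_defect m m x y z = 0.
Proof.
split=> mL x y z.
  by rewrite /leibniz_defect mL addrAC addrK subrr.
by apply/eqP; rewrite -subr_eq0 opprD addrA; apply/eqP/mL.
Qed.

Lemma compatible_leibnizP (V : zmodType) (m1 m2 : V -> V -> V) :
  compatible_leibniz m1 m2 <->
  [/\ leibniz m1, leibniz m2 &
      forall x y z, leibniz_defect m2 m1 x y z + leibniz_defect m1 m2 x y z = 0].
Proof.
suff defectE x y z :
    m2 x (m1 y z) + m1 x (m2 y z) - m2 (m1 x y) z - m1 (m2 x y) z
      - m2 y (m1 x z) - m1 y (m2 x z)
    = leibniz_defect m2 m1 x y z + leibniz_defect m1 m2 x y z.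
  rewrite /compatible_leibniz; split=> -[L1 L2 C]; split=> // x y z.
    by rewrite -defectE.
  by rewrite defectE.
rewrite /leibniz_defect [RHS]addrACA [X in _ = X + _]addrACA !addrA.
by rewrite (addrAC _ (- m1 y (m2 x z))).
Qed.

Definition dsum_defect_coef1 (A : zmodType) (mA ml mr nA nl nr : A -> A -> A) (y z v : A) : A :=
  ml (nA y z) v + mr v (nA y z) + ml z (nl y v) + mr (nl y v) z
  - nl y (ml z v) - nr (ml z v) y - nl y (mr v z) - nr (mr v z) y.
Definition dsum_defect_coef2 (A : zmodType) (mA ml mr nA nl nr : A -> A -> A) (x z v : A) : A :=
  nl x (ml z v) + nl x (mr v z) - nl z (ml x v) - nr (ml x v) z
  - nl (mA x z) v - nr v (mA x z).
Definition dsum_defect_coef3 (A : zmodType) (mA ml mr nA nl nr : A -> A -> A) (x y v : A) : A :=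
  nl y (ml x v) + ml (nA x y) v - ml x (nl y v).

Section DualExtension.
Variables (K : fieldType) (A : vectType K) (mA ml mr nA nl nr : A -> A -> A).
Hypotheses (bml : bilinear_mul ml) (bmr : bilinear_mul mr).
Hypotheses (bnl : bilinear_mul nl) (bnr : bilinear_mul nr).

Local Notation M := (dsum_mul mA ml mr).
Local Notation N := (dsum_mul nA nl nr).

Lemma leibniz_defect_dsum_snd x y z a b c v :
  (leibniz_defect M N (x, a) (y, b) (z, c)).2 v =
  a (dsum_defect_coef1 mA ml mr nA nl nr y z v)
  + b (dsum_defect_coef2 mA ml mr nA nl nr x z v)
  + c (dsum_defect_coef3 mA ml mr nA nl nr x y v).
Proof.
rewrite /= !(add_lfunE, opp_lfunE, dual_rep_LmulE bml, dual_rep_RmulE bmr,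
  dual_rep_LmulE bnl, dual_rep_RmulE bnr).
rewrite /dsum_defect_coef1 /dsum_defect_coef2 /dsum_defect_coef3 !(dualD, dualN).
ring.
Qed.
End DualExtension.

Lemma dsum_leibniz (K : fieldType) (A : vectType K) (mA ml mr : A -> A -> A) :
  bilinear_mul ml -> bilinear_mul mr -> leibniz mA ->
  (forall y z v, dsum_defect_coef1 mA ml mr mA ml mr y z v = 0) ->
  (forall x z v, dsum_defect_coef2 mA ml mr mA ml mr x z v = 0) ->
  (forall x y v, dsum_defect_coef3 mA ml mr mA ml mr x y v = 0) ->
  leibniz (dsum_mul mA ml mr).
Proof.
move=> bml bmr /leibniz_defectP mAL c1 c2 c3.
apply/leibniz_defectP => -[x a] [y b] [z c]; apply: injective_projections.
  exact: mAL.
apply/lfunP => v; rewrite leibniz_defect_dsum_snd // c1 c2 c3 !raddf0 zero_lfunE.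
by rewrite !addr0.
Qed.

Definition dsum_compat_coef1 (A : zmodType) (mA ml mr nA nl nr : A -> A -> A) (y z v : A) : A :=
  dsum_defect_coef1 nA nl nr mA ml mr y z v + dsum_defect_coef1 mA ml mr nA nl nr y z v.
Definition dsum_compat_coef2 (A : zmodType) (mA ml mr nA nl nr : A -> A -> A) (x z v : A) : A :=
  dsum_defect_coef2 nA nl nr mA ml mr x z v + dsum_defect_coef2 mA ml mr nA nl nr x z v.
Definition dsum_compat_coef3 (A : zmodType) (mA ml mr nA nl nr : A -> A -> A) (x y v : A) : A :=
  dsum_defect_coef3 nA nl nr mA ml mr x y v + dsum_defect_coef3 mA ml mr nA nl nr x y v.

Section DualCompatible.
Variables (K : fieldType) (A : vectType K) (mA ml mr nA nl nr : A -> A -> A).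
Hypotheses (bml : bilinear_mul ml) (bmr : bilinear_mul mr).
Hypotheses (bnl : bilinear_mul nl) (bnr : bilinear_mul nr).

Local Notation M := (dsum_mul mA ml mr).
Local Notation N := (dsum_mul nA nl nr).
Local Notation compat_defect p q s := (leibniz_defect N M p q s + leibniz_defect M N p q s).

Lemma compat_defect_dsum_snd x y z a b c v :
  (compat_defect (x, a) (y, b) (z, c)).2 v =
  a (dsum_compat_coef1 mA ml mr nA nl nr y z v)
  + b (dsum_compat_coef2 mA ml mr nA nl nr x z v)
  + c (dsum_compat_coef3 mA ml mr nA nl nr x y v).
Proof.
rewrite add_lfunE !leibniz_defect_dsum_snd // !dualD; ring.
Qed.

Lemma dsum_compatibleP :
  (forall p q s, compat_defect p q s = 0) <->
  [/\ forall x y z, leibniz_defect nA mA x y z + leibniz_defect mA nA x y z = 0,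
      forall y z v, dsum_compat_coef1 mA ml mr nA nl nr y z v = 0,
      forall x z v, dsum_compat_coef2 mA ml mr nA nl nr x z v = 0 &
      forall x y v, dsum_compat_coef3 mA ml mr nA nl nr x y v = 0].
Proof.
split=> [C | [C0 C1 C2 C3] [x a] [y b] [z c]].
  have C_snd x y z a b c (v : A) :=
    congr1 (fun p : A * dual A => p.2 v) (C (x, a) (y, b) (z, c)).
  split=> [x y z | y z v | x z v | x y v].
  - exact: (congr1 fst (C (x, 0) (y, 0) (z, 0))).
  - apply: eq0_by_dual => a; have := C_snd 0 y z a 0 0 v.
    by rewrite compat_defect_dsum_snd !zero_lfunE !addr0.
  - apply: eq0_by_dual => b; have := C_snd x 0 z 0 b 0 v.
    by rewrite compat_defect_dsum_snd !zero_lfunE add0r addr0.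
  - apply: eq0_by_dual => c; have := C_snd x y 0 0 0 c v.
    by rewrite compat_defect_dsum_snd !zero_lfunE !add0r.
apply: injective_projections; first exact: C0.
by apply/lfunP => v; rewrite compat_defect_dsum_snd C1 C2 C3 !raddf0 zero_lfunE !addr0.
Qed.

End DualCompatible.

Definition pre_leibniz_defect1 (A : zmodType) (l r : A -> A -> A) (x y z : A) : A :=
  l x (l y z) - (l (l x y) z + l (r x y) z + l y (l x z)).
Definition pre_leibniz_defect2 (A : zmodType) (l r : A -> A -> A) (x y z : A) : A :=
  r x (l y z) - (l y (r x z) - r (l y x) z - r x (r y z)).
Definition pre_leibniz_defect3 (A : zmodType) (l r : A -> A -> A) (x y z : A) : A :=
  r (l x y) z + r (r y x) z.

(* (ND4) and the two halves of (ND5), written for x |- y = l x y and x -| y = - r y x. *)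
Definition nd4_defect (A : zmodType) (r : A -> A -> A) (x y z : A) : A :=
  r x (r y z) - r y (r x z).
Definition nd5l_defect (A : zmodType) (l r : A -> A -> A) (x y z : A) : A :=
  l (r x y) z - r x (l y z).
Definition nd5r_defect (A : zmodType) (l r : A -> A -> A) (x y z : A) : A :=
  r x (l y z) + l (l y x) z.

(* In the certificates below, d is an explicit combination of instances of the (pre-)Leibniz
   defects, found by solving a linear system over the trilinear monomials in l and r. *)
Lemma eq_mod_vanishing (V : zmodType) (d w1 w2 : V) : d = 0 -> w1 = w2 + d -> w1 = w2.
Proof. by move=> -> ->; rewrite addr0. Qed.

(* Closes an identity between multilinear expressions in A: after pairing with an arbitrary
   functional u, the values of u on the nested products are independent ring atoms. *)
Ltac linear_identity bl br :=
  apply: eq_by_dual => u;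
  rewrite ?add0r /leibniz_defect /dsum_compat_coef1 /dsum_compat_coef2 /dsum_compat_coef3
    /dsum_defect_coef1 /dsum_defect_coef2 /dsum_defect_coef3
    /pre_leibniz_defect1 /pre_leibniz_defect2 /pre_leibniz_defect3
    /nd4_defect /nd5l_defect /nd5r_defect /subadj;
  rewrite ?(bimulDl bl, bimulDr bl, bimulNl bl, bimulNr bl,
            bimulDl br, bimulDr br, bimulNl br, bimulNr br) ?(dualD, dualN);
  ring.

Lemma coadjoint_dsum_leibniz (K : fieldType) (A : vectType K) (m : A -> A -> A) :
  bilinear_mul m -> leibniz m -> leibniz (dsum_mul m m m).
Proof.
move=> bm mL; have /leibniz_defectP J0 := mL.
apply: dsum_leibniz => // [y z v | x z v | x y v].
- apply: (eq_mod_vanishing (d := - leibniz_defect m m y z v - leibniz_defect m m y v z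
                                 + leibniz_defect m m z v y + leibniz_defect m m v z y)).
    by rewrite !J0 !(oppr0, addr0).
  linear_identity bm bm.
- apply: (eq_mod_vanishing (d := leibniz_defect m m x z v + leibniz_defect m m x v z)).
    by rewrite !J0 addr0.
  linear_identity bm bm.
- apply: (eq_mod_vanishing (d := - leibniz_defect m m x y v)); first by rewrite J0 oppr0.
  linear_identity bm bm.
Qed.

Section PreLeibniz.
Variables (K : fieldType) (A : vectType K) (l r : A -> A -> A).
Hypotheses (bl : bilinear_mul l) (br : bilinear_mul r) (preA : pre_leibniz l r).

Local Notation s := (subadj l r).
Local Notation d1 := (pre_leibniz_defect1 l r).
Local Notation d2 := (pre_leibniz_defect2 l r).
Local Notation d3 := (pre_leibniz_defect3 l r).
Local Notation nd4 := (nd4_defect r).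
Local Notation nd5l := (nd5l_defect l r).
Local Notation nd5r := (nd5r_defect l r).

Lemma pre_leibniz_defect1_eq0 x y z : d1 x y z = 0.
Proof. by case: preA => P1 _ _; rewrite /pre_leibniz_defect1 P1 subrr. Qed.
Lemma pre_leibniz_defect2_eq0 x y z : d2 x y z = 0.
Proof. by case: preA => _ P2 _; rewrite /pre_leibniz_defect2 P2 subrr. Qed.
Lemma pre_leibniz_defect3_eq0 x y z : d3 x y z = 0.
Proof. by case: preA => _ _ P3; rewrite /pre_leibniz_defect3 P3 addNr. Qed.

Ltac pre_leibniz_vanish :=
  by rewrite !(pre_leibniz_defect1_eq0, pre_leibniz_defect2_eq0, pre_leibniz_defect3_eq0)
             !(mul0rn, oppr0, addr0).

Lemma pre_leibniz_subadj_leibniz : leibniz s.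
Proof.
apply/leibniz_defectP => x y z.
apply: (eq_mod_vanishing (d := d1 x y z + d2 x y z - d2 y x z - d3 y x z)).
  pre_leibniz_vanish.
linear_identity bl br.
Qed.

Lemma pre_leibniz_dsum_leibniz : leibniz (dsum_mul s l r).
Proof.
apply: (dsum_leibniz bl br pre_leibniz_subadj_leibniz) => [y z v | x z v | x y v].
- apply: (eq_mod_vanishing (d := - d1 y z v + d2 v y z - d3 z v y)); first pre_leibniz_vanish.
  linear_identity bl br.
- apply: (eq_mod_vanishing (d := d1 x z v - d2 v x z)); first pre_leibniz_vanish.
  linear_identity bl br.
- apply: (eq_mod_vanishing (d := - d1 x y v)); first pre_leibniz_vanish.
  linear_identity bl br.
Qed.

Local Notation C1 := (dsum_compat_coef1 s l r s s s).
Local Notation C2 := (dsum_compat_coef2 s l r s s s).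
Local Notation C3 := (dsum_compat_coef3 s l r s s s).

Lemma compat_coef1E y z v :
  C1 y z v = nd4 y z v - nd5l y v z + nd5l z v y + nd5r z v y.
Proof.
apply: (eq_mod_vanishing (d :=
  - d1 y z v *+ 2 - d1 y v z + d1 z v y + d1 v z y - d2 y z v - d2 y v z + d2 z y v
  + d2 v y z *+ 2 + d3 z y v - d3 z v y *+ 2 + d3 v y z - d3 v z y)); first pre_leibniz_vanish.
linear_identity bl br.
Qed.

Lemma compat_coef2E x z v : C2 x z v = nd5l x v z - nd4 x z v.
Proof.
apply: (eq_mod_vanishing (d :=
  d1 x z v *+ 2 + d1 x v z + d2 x z v + d2 x v z - d2 z x v - d2 v x z *+ 2
  - d3 z x v - d3 v x z)); first pre_leibniz_vanish.
linear_identity bl br.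
Qed.

Lemma compat_coef3E x y v : C3 x y v = nd4 x y v.
Proof.
apply: (eq_mod_vanishing (d := - d1 x y v *+ 2 - d2 x y v + d2 y x v + d3 y x v)).
  pre_leibniz_vanish.
linear_identity bl br.
Qed.

Lemma compat_coefs_novikovP :
  [/\ forall y z v, C1 y z v = 0, forall x z v, C2 x z v = 0 & forall x y v, C3 x y v = 0]
  <-> [/\ forall x y z, nd4 x y z = 0, forall x y z, nd5l x y z = 0
         & forall x y z, nd5r x y z = 0].
Proof.
split=> [[C1_0 C2_0 C3_0] | [N4 N5l N5r]]; last first.
  split=> *; rewrite ?compat_coef1E ?compat_coef2E ?compat_coef3E.
  - by rewrite N4 !N5l N5r !(oppr0, addr0).
  - by rewrite N4 N5l subr0.
  - exact: N4.
have N4 x y z : nd4 x y z = 0 by rewrite -compat_coef3E.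
have N5l x y z : nd5l x y z = 0.
  by have := compat_coef2E x z y; rewrite C2_0 N4 subr0.
split=> // x y z.
by have := compat_coef1E z x y; rewrite C1_0 N4 !N5l !(oppr0, add0r).
Qed.

Lemma novikov_dialgebraP :
  novikov_dialgebra l (fun x y => - r y x)
  <-> [/\ forall x y z, nd4 x y z = 0, forall x y z, nd5l x y z = 0
        & forall x y z, nd5r x y z = 0].
Proof.
split=> [[_ _ _ N4 N5] | [N4 N5l N5r]].
  split=> x y z.
  - by move/eqP: (N4 x y z); rewrite -subr_eq0 => /eqP <-; linear_identity bl br.
  - by move/esym/eqP: (N5 x y z).1; rewrite -subr_eq0 => /eqP <-; linear_identity bl br.
  - by move/esym/eqP: (N5 x y z).2; rewrite -subr_eq0 => /eqP <-; linear_identity bl br.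
split=> x y z; last split.
- apply: (eq_mod_vanishing (d := d1 x y z)); first exact: pre_leibniz_defect1_eq0.
  linear_identity bl br.
- apply: (eq_mod_vanishing (d := - d2 x y z)); first by rewrite pre_leibniz_defect2_eq0 oppr0.
  linear_identity bl br.
- apply: (eq_mod_vanishing (d := - d3 x y z)); first by rewrite pre_leibniz_defect3_eq0 oppr0.
  linear_identity bl br.
- apply: (eq_mod_vanishing (d := nd4 x y z)); first exact: N4.
  linear_identity bl br.
- apply: (eq_mod_vanishing (d := - nd5l x y z)); first by rewrite N5l oppr0.
  linear_identity bl br.
- apply: (eq_mod_vanishing (d := - nd5r x y z)); first by rewrite N5r oppr0.
  linear_identity bl br.
Qed.

End PreLeibniz.

Theorem proposition3p9 (K : fieldType) (charK0 : [pchar K] =i pred0)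
  (A : vectType K) (l r : A -> A -> A)
  (bil_l : bilinear_mul l) (bil_r : bilinear_mul r)
  (preA : pre_leibniz l r) :
  compatible_leibniz
    (dsum_mul (subadj l r) l r)
    (dsum_mul (subadj l r) (subadj l r) (subadj l r))
  <-> novikov_dialgebra l (fun x y => - r y x).
Proof.
have bs := subadj_bilinear bil_l bil_r.
have sL := pre_leibniz_subadj_leibniz bil_l bil_r preA.
have compatP := dsum_compatibleP (subadj l r) (subadj l r) bil_l bil_r bs bs.
rewrite compatible_leibnizP (novikov_dialgebraP bil_l bil_r preA).
rewrite -(compat_coefs_novikovP bil_l bil_r preA).
split=> [[_ _ /compatP [_ C1 C2 C3]] // | C].
split; [exact: pre_leibniz_dsum_leibniz | exact: coadjoint_dsum_leibniz | apply/compatP].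
case: C => C1 C2 C3; split=> // x y z.
by move/leibniz_defectP: sL => ->; rewrite addr0.
Qed.
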